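(* Let $V$ and $W$ be groups, $r\in\mathbb N$, and let $f,g\colon\mathbb ZV\to\mathbb ZW$ be $r$-strict additive homomorphisms. Then the additive homomorphism $h\colon\mathbb ZV\to\mathbb ZW$ defined by $h(e_v)=f(e_v)g(e_v)$ ($v\in V$) is $r$-strict.
   Context: $\mathbb ZV$ is the group ring with basis $e_v$, $\Delta(V)$ its augmentation ideal, $\Delta(V)^0=\mathbb ZV$. An additive homomorphism $h\colon\mathbb ZV\to\mathbb ZW$ is $r$-strict if $h(\Delta(V)^s)\subset\Delta(W)^s$ for all $s\in\mathbb N$ with $s\le r$. *)

(* Integral group rings ZV of arbitrary (possibly infinite)
   groups V, modelled as finitely supported functions V -> int. *)
From HB Require Import structures.
From mathcomp Require Import all_boot all_algebra.
From mathcomp Require Import finmap.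

Set Implicit Arguments.
Unset Strict Implicit.
Unset Printing Implicit Defensive.

Import GRing.Theory.
Local Open Scope fset_scope.
Local Open Scope ring_scope.

Section GroupRing.
Variable V : groupType.

Definition ZG : Type := {fsfun V -> int with 0}.

Definition ebasis (v : V) : ZG := [fsfun x in [fset v] => 1].

Definition zg0 : ZG := [fsfun x in (fset0 : {fset V}) => 0].

Definition zgadd (a b : ZG) : ZG :=
  [fsfun x in finsupp a `|` finsupp b => a x + b x].

Definition zgopp (a : ZG) : ZG := [fsfun x in finsupp a => - a x].

Definition zgmul (a b : ZG) : ZG :=
  [fsfun x in [fset (u * w)%g | u in finsupp a, w in finsupp b] =>
     \sum_(u <- finsupp a) a u * b ((u^-1) * x)%g].

Definition aug (a : ZG) : int := \sum_(v <- finsupp a) a v.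

(* augpow s x  <->  x lies in Delta(V)^s  (Delta(V)^0 = ZV);
   Delta(V)^(s+1) is the additive subgroup generated by the products a*b
   with a in Delta(V) and b in Delta(V)^s. *)
Inductive augpow : nat -> ZG -> Prop :=
| augpow_0 x : augpow 0 x
| augpow_mul s a b : aug a = 0 -> augpow s b -> augpow s.+1 (zgmul a b)
| augpow_zero s : augpow s.+1 zg0
| augpow_add s x y : augpow s.+1 x -> augpow s.+1 y -> augpow s.+1 (zgadd x y)
| augpow_opp s x : augpow s.+1 x -> augpow s.+1 (zgopp x).

End GroupRing.

Definition additive_zg (V W : groupType) (h : ZG V -> ZG W) : Prop :=
  forall a b, h (zgadd a b) = zgadd (h a) (h b).

Definition strict (V W : groupType) (r : nat) (h : ZG V -> ZG W) : Prop :=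
  forall s : nat, (s <= r)%N -> forall x, augpow s x -> augpow s (h x).

From HB Require Import structures.
From mathcomp Require Import all_boot all_algebra.
From mathcomp Require Import finmap.

(* Delta(V)^s is additively generated by the monomials
   (e_v1 - 1) ... (e_vs - 1) e_w, so it suffices to treat h on them.  Writing
   f (.) g for the additive map with basis values f(e_u) g(e_u), a discrete
   Leibniz rule gives
     (f (.) g)((e_v - 1) y) = (f' (.) g'')(y) + (f (.) g')(y),
   with f' = f((e_v - 1) .), g' = g((e_v - 1) .) and g'' = g(e_v .).  Each
   factor (e_v - 1) is thus absorbed by one of f, g, raising by one the
   augmentation power it reaches; induction on the length of the monomial then
   lands in Delta(W)^a * Delta(W)^b with a + b = s. *)

Set Implicit Arguments.
Unset Strict Implicit.
Unset Printing Implicit Defensive.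
Import GRing.Theory.
Local Open Scope fset_scope.
Local Open Scope ring_scope.

Section GroupRing.
Variable V : groupType.
Implicit Types (a b c x y : ZG V) (u v w : V).

Lemma zgaddE a b u : zgadd a b u = a u + b u.
Proof.
rewrite /zgadd fsfun_fun; case: ifP => //; rewrite in_fsetU => /norP[].
by rewrite !memNfinsupp => /eqP -> /eqP ->.
Qed.

Lemma zgoppE a u : zgopp a u = - a u.
Proof.
rewrite /zgopp fsfun_fun; case: ifP => // /negbT.
by rewrite memNfinsupp => /eqP ->; rewrite oppr0.
Qed.

Lemma zg0E u : zg0 V u = 0.
Proof. by rewrite /zg0 fsfun_fun in_fset0. Qed.

Lemma ebasisE v u : ebasis v u = (u == v)%:R.
Proof. by rewrite /ebasis fsfun_fun in_fset1; case: eqP. Qed.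

Lemma zgaddA : associative (@zgadd V).
Proof. by move=> a b c; apply/fsfunP => u; rewrite !zgaddE addrA. Qed.

Lemma zgaddC : commutative (@zgadd V).
Proof. by move=> a b; apply/fsfunP => u; rewrite !zgaddE addrC. Qed.

Lemma zgadd0 : left_id (zg0 V) (@zgadd V).
Proof. by move=> a; apply/fsfunP => u; rewrite zgaddE zg0E add0r. Qed.

Lemma zgaddN : left_inverse (zg0 V) (@zgopp V) (@zgadd V).
Proof. by move=> a; apply/fsfunP => u; rewrite zgaddE zgoppE zg0E addNr. Qed.

HB.instance Definition _ := Choice.on (ZG V).
HB.instance Definition _ :=
  GRing.isZmodule.Build (ZG V) zgaddA zgaddC zgadd0 zgaddN.

Lemma finsupp_subset a (S : {fset V}) :
  (forall u, u \notin S -> a u = 0) -> finsupp a `<=` S.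
Proof.
move=> aS; apply/fsubsetP => u; rewrite mem_finsupp.
by apply: contraR => /aS ->.
Qed.

Lemma finsupp_zgadd a b : finsupp (a + b) `<=` finsupp a `|` finsupp b.
Proof.
apply: finsupp_subset => u; rewrite in_fsetU => /norP[].
by rewrite zgaddE !memNfinsupp => /eqP -> /eqP ->; rewrite addr0.
Qed.

Lemma finsupp_ebasis v : finsupp (ebasis v) `<=` [fset v].
Proof. by apply: finsupp_subset => u; rewrite in_fset1 ebasisE => /negbTE ->. Qed.

Lemma big_finsupp_widen (R : nmodType) a (S : {fset V}) (F : V -> int -> R) :
  finsupp a `<=` S -> (forall u, F u 0 = 0) ->
  \sum_(u <- finsupp a) F u (a u) = \sum_(u <- S) F u (a u).
Proof.
move=> aS F0; apply: big_fset_incl aS _ => u _.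
by rewrite memNfinsupp => /eqP ->.
Qed.

Lemma zgmulE a b u : zgmul a b u = \sum_(t <- finsupp a) a t * b (t^-1 * u)%g.
Proof.
rewrite /zgmul fsfun_fun; case: ifP => // uNab.
rewrite big1_seq // => t /andP[_ ta]; suff -> : b (t^-1 * u)%g = 0 by rewrite mulr0.
apply/eqP; rewrite -memNfinsupp; apply: contraFN uNab => tub.
by apply/imfset2P; exists t => //; exists (t^-1 * u)%g => //; rewrite mulVKg.
Qed.

Lemma zgmulE_widen a b (S : {fset V}) u : finsupp a `<=` S ->
  zgmul a b u = \sum_(t <- S) a t * b (t^-1 * u)%g.
Proof.
move=> aS; rewrite zgmulE.
exact: (big_finsupp_widen (F := fun t n => n * b (t^-1 * u)%g) aS (fun t => mul0r _)).
Qed.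

Lemma finsupp_zgmul a b :
  finsupp (zgmul a b) `<=` [fset (t * w)%g | t in finsupp a, w in finsupp b].
Proof. by apply: finsupp_subset => u uN; rewrite /zgmul fsfun_fun (negbTE uN). Qed.

(* Reindexing by w |-> t w, which is legitimate because G vanishes outside
   t * finsupp b. *)
Lemma big_translate (G : V -> int) t a b :
  t \in finsupp a -> (forall u, b (t^-1 * u)%g = 0 -> G u = 0) ->
  \sum_(u <- [fset (t * w)%g | t in finsupp a, w in finsupp b]) G u =
  \sum_(w <- finsupp b) G (t * w)%g.
Proof.
move=> ta G0.
have sub : [fset (t * w)%g | w in finsupp b] `<=`
           [fset (t * w)%g | t in finsupp a, w in finsupp b].
  by apply/fsubsetP => u /imfsetP [w wb ->]; apply/imfset2P; exists t => //; exists w.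
rewrite -(big_fset_incl _ sub); last first.
  move=> u _ uN; apply: G0; apply/eqP; rewrite -memNfinsupp; apply: contra uN => ub.
  by apply/imfsetP; exists (t^-1 * u)%g => //; rewrite mulVKg.
by rewrite big_imfset //= => w1 w2 _ _; apply: mulgI.
Qed.

Lemma zgmulA : associative (@zgmul V).
Proof.
move=> a b c; apply/fsfunP => u; symmetry.
rewrite (zgmulE_widen _ _ (finsupp_zgmul a b)).
under eq_bigr => x _ do rewrite zgmulE big_distrl /=.
rewrite exchange_big /= zgmulE big_seq [RHS]big_seq; apply: eq_bigr => t ta.
rewrite zgmulE big_distrr /= (big_translate ta) => [|x bx0]; last first.
  by rewrite bx0 mulr0 mul0r.
by apply: eq_bigr => w _; rewrite mulKg invgM mulgA mulrA.
Qed.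

Lemma zgmulDl : left_distributive (@zgmul V) +%R.
Proof.
move=> a b c; apply/fsfunP => u; rewrite zgaddE.
rewrite (zgmulE_widen _ _ (finsupp_zgadd a b)).
rewrite (zgmulE_widen _ _ (fsubsetUl (finsupp a) (finsupp b))).
rewrite (zgmulE_widen _ _ (fsubsetUr (finsupp a) (finsupp b))) -big_split /=.
by apply: eq_bigr => t _; rewrite zgaddE mulrDl.
Qed.

Lemma zgmulDr : right_distributive (@zgmul V) +%R.
Proof.
move=> a b c; apply/fsfunP => u; rewrite zgaddE !zgmulE -big_split /=.
by apply: eq_bigr => t _; rewrite zgaddE mulrDr.
Qed.

Lemma zgmul1 : left_id (ebasis 1%g) (@zgmul V).
Proof.
move=> a; apply/fsfunP => u.
by rewrite (zgmulE_widen _ _ (finsupp_ebasis _)) big_seq_fset1 ebasisE eqxx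
  mul1r invg1 mul1g.
Qed.

Lemma zgmulr1 : right_id (ebasis 1%g) (@zgmul V).
Proof.
move=> a; apply/fsfunP => u; rewrite zgmulE.
rewrite (big_finsupp_widen (F := fun t n => n * ebasis 1%g (t^-1 * u)%g)
          (fsubsetUl (finsupp a) [fset u]) (fun t => mul0r _)) /=.
rewrite -(big_fset_incl _ (fsubsetUr (finsupp a) [fset u])); last first.
  move=> t _; rewrite in_fset1 ebasisE => tu.
  suff -> : (t^-1 * u == 1)%g = false by rewrite mulr0.
  by apply: contraNF tu => /eqP tu1; apply/eqP; rewrite -[u](mulVKg t) tu1 mulg1.
by rewrite big_seq_fset1 ebasisE mulVg eqxx mulr1.
Qed.

Lemma ebasis1_neq0 : ebasis 1%g != 0 :> ZG V.
Proof.
apply/eqP => /(congr1 (fun x : ZG V => x 1%g)) /eqP.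
by rewrite ebasisE zg0E eqxx.
Qed.

HB.instance Definition _ := GRing.Zmodule_isNzRing.Build (ZG V)
  zgmulA zgmul1 zgmulr1 zgmulDl zgmulDr ebasis1_neq0.

Lemma ebasisM u v : ebasis u * ebasis v = ebasis (u * v)%g.
Proof.
apply/fsfunP => x; rewrite (zgmulE_widen _ _ (finsupp_ebasis u)) big_seq_fset1.
rewrite !ebasisE eqxx mul1r; congr ((_ : bool)%:R).
by apply/eqP/eqP => [<-|->]; rewrite ?mulVKg ?mulKg.
Qed.

Lemma evalE_sum (I : Type) (l : seq I) (F : I -> ZG V) u :
  (\sum_(i <- l) F i) u = \sum_(i <- l) F i u.
Proof.
elim: l => [|i l IH]; first by rewrite !big_nil zg0E.
by rewrite !big_cons zgaddE IH.
Qed.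

Lemma evalE_mulrz a (n : int) u : (a *~ n) u = a u * n.
Proof.
have evalE_mulrn m : (a *+ m) u = a u *+ m.
  by elim: m => [|m IH]; rewrite ?mulr0n ?zg0E // !mulrS zgaddE IH.
case: n => m; first by rewrite evalE_mulrn -mulr_natr natz.
by rewrite NegzE mulrNz zgoppE evalE_mulrn mulrN -mulr_natr natz.
Qed.

Lemma zg_decomp x : x = \sum_(u <- finsupp x) ebasis u *~ x u.
Proof.
apply/fsfunP => t; rewrite evalE_sum.
under eq_bigr => u _ do rewrite evalE_mulrz ebasisE mulrC.
rewrite (big_finsupp_widen (F := fun u n => n * (t == u)%:R)
          (fsubsetUl (finsupp x) [fset t]) (fun u => mul0r _)) /=.
rewrite -(big_fset_incl _ (fsubsetUr (finsupp x) [fset t])); last first.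
  by move=> u _; rewrite in_fset1 eq_sym => /negbTE ->; rewrite mulr0.
by rewrite big_seq_fset1 eqxx mulr1.
Qed.

Lemma augE_widen a (S : {fset V}) : finsupp a `<=` S -> aug a = \sum_(u <- S) a u.
Proof. by move=> aS; exact: (big_finsupp_widen (F := fun _ n => n) aS). Qed.

Lemma aug_ebasis v : aug (ebasis v) = 1.
Proof. by rewrite (augE_widen (finsupp_ebasis v)) big_seq_fset1 ebasisE eqxx. Qed.

Lemma augD a b : aug (a + b) = aug a + aug b.
Proof.
rewrite (augE_widen (finsupp_zgadd a b)).
rewrite (augE_widen (fsubsetUl (finsupp a) (finsupp b))).
rewrite (augE_widen (fsubsetUr (finsupp a) (finsupp b))) -big_split /=.
by apply: eq_bigr => u _; rewrite zgaddE.
Qed.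

Lemma aug_ebasis_sub1 v : aug (ebasis v - 1) = 0.
Proof.
apply: (addIr (aug (1 : ZG V))); rewrite -augD subrK add0r.
by rewrite aug_ebasis (aug_ebasis 1%g).
Qed.

Lemma augM a b : aug (a * b) = aug a * aug b.
Proof.
rewrite (augE_widen (finsupp_zgmul a b)) /aug big_distrl /=.
under eq_bigr => u _ do rewrite zgmulE.
rewrite exchange_big /= big_seq [RHS]big_seq; apply: eq_bigr => t ta.
rewrite -big_distrr /= (big_translate ta) => [|//].
by congr (_ * _); apply: eq_bigr => w _; rewrite mulKg.
Qed.

(** * Powers of the augmentation ideal *)

Lemma augpow0 s : augpow s (0 : ZG V).
Proof. by case: s => [|s]; [apply: augpow_0 | apply: augpow_zero]. Qed.

Lemma augpowD s x y : augpow s x -> augpow s y -> augpow s (x + y).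
Proof. by case: s => [|s] xs ys; [apply: augpow_0 | apply: augpow_add]. Qed.

Lemma augpowN s x : augpow s x -> augpow s (- x).
Proof. by case: s => [|s] xs; [apply: augpow_0 | apply: augpow_opp]. Qed.

Lemma augpow_mull s a b : augpow s b -> augpow s (a * b).
Proof.
elim=> {s b} [b|s c b c0 bs _|s|s x y _ IHx _ IHy|s x _ IH].
- exact: augpow_0.
- by rewrite mulrA; apply: augpow_mul _ bs; rewrite augM c0 mulr0.
- by rewrite mulr0; apply: augpow0.
- by rewrite mulrDr; apply: augpowD.
- by rewrite mulrN; apply: augpowN.
Qed.

Lemma augpowM i j a b : augpow i a -> augpow j b -> augpow (i + j) (a * b).
Proof.
move=> ai bj; elim: ai => {i a} [a|s c a c0 _ IH|s|s x y _ IHx _ IHy|s x _ IH].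
- exact: augpow_mull.
- by rewrite -mulrA addSn; apply: augpow_mul.
- by rewrite mul0r; apply: augpow0.
- by rewrite mulrDl; apply: augpowD.
- by rewrite mulNr; apply: augpowN.
Qed.

Definition aug_monomial (vs : seq V) w : ZG V :=
  foldr (fun v y => (ebasis v - 1) * y) (ebasis w) vs.

Definition zmod_closed_prop (P : ZG V -> Prop) :=
  P 0 /\ forall x y, P x -> P y -> P (x - y).

Section ZmodClosed.
Variables (P : ZG V -> Prop) (Pcl : zmod_closed_prop P).

Lemma zmod_closedN x : P x -> P (- x).
Proof. by move=> Px; rewrite -sub0r; apply: Pcl.2 => //; apply: Pcl.1. Qed.

Lemma zmod_closedD x y : P x -> P y -> P (x + y).
Proof. by move=> Px Py; rewrite -[y]opprK; apply: Pcl.2 => //; apply: zmod_closedN. Qed.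

Lemma zmod_closed_sum (I : Type) (l : seq I) (F : I -> ZG V) (n : I -> int) :
  (forall i, P (F i)) -> P (\sum_(i <- l) F i *~ n i).
Proof.
have PMn y m : P y -> P (y *+ m).
  move=> Py; elim: m => [|m IH]; first by rewrite mulr0n; apply: Pcl.1.
  by rewrite mulrS; apply: zmod_closedD.
move=> PF; elim: l => [|i l IH]; first by rewrite big_nil; apply: Pcl.1.
rewrite big_cons; apply: zmod_closedD => //.
by case: (n i) => m; rewrite ?NegzE ?mulrNz; [|apply: zmod_closedN]; apply: PMn.
Qed.

End ZmodClosed.

Lemma zg_decomp_aug0 a : aug a = 0 ->
  a = \sum_(u <- finsupp a) (ebasis u - 1) *~ a u.
Proof.
move=> a0; under eq_bigr => u _ do rewrite mulrzBl.
by rewrite sumrB -zg_decomp -mulrz_sumr -/(aug a) a0 mulr0z subr0.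
Qed.

Lemma augpow_ind s x : augpow s x ->
  forall P, zmod_closed_prop P ->
  (forall vs w, size vs = s -> P (aug_monomial vs w)) -> P x.
Proof.
elim=> {s x} [x|s a b a0 _ IH|s|s x y _ IHx _ IHy|s x _ IH] P Pcl Pgen.
- rewrite (zg_decomp x); apply: zmod_closed_sum => // u.
  exact: (Pgen [::]).
- apply: (IH (fun y => P (a * y))) => [|vs w vs_s].
    by split=> [|y z]; rewrite ?mulr0 ?mulrBr; [apply: Pcl.1 | apply: Pcl.2].
  rewrite (zg_decomp_aug0 a0) mulr_suml.
  under eq_bigr => u _ do rewrite mulrzAl.
  by apply: zmod_closed_sum => // u; apply: (Pgen (u :: vs)); rewrite /= vs_s.
- exact: Pcl.1.
- by apply: (zmod_closedD Pcl); [apply: IHx | apply: IHy].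
- by apply: (zmod_closedN Pcl); apply: IH.
Qed.

End GroupRing.

(** * Additive maps and their product on the basis *)

Section AdditiveMaps.
Variables V W : groupType.
Implicit Types (f g : ZG V -> ZG W) (x y : ZG V).

Lemma additive_zgD f : additive_zg f -> {morph f : x y / x + y}.
Proof. by []. Qed.

Lemma additive_zg0 f : additive_zg f -> f 0 = 0.
Proof. by move=> fD; apply: (addrI (f 0)); rewrite -additive_zgD // !addr0. Qed.

Lemma additive_zgB f : additive_zg f -> forall x y, f (x - y) = f x - f y.
Proof.
by move=> fD x y; apply: (addIr (f y)); rewrite -additive_zgD // !subrK.
Qed.

Lemma additive_zg_mull f c : additive_zg f -> additive_zg (fun x => f (c * x)).
Proof. by move=> fD x y; rewrite -fD; congr f; apply: mulrDr. Qed.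

Lemma additive_zg_add f g : additive_zg f -> additive_zg g ->
  additive_zg (fun x => f x + g x).
Proof. by move=> fD gD x y; rewrite fD gD; apply: addrACA. Qed.

Lemma zmod_closed_augpow_comp f s : additive_zg f ->
  zmod_closed_prop (fun x => augpow s (f x)).
Proof.
move=> fD; split=> [|x y xs ys]; first by rewrite additive_zg0 //; apply: augpow0.
by rewrite additive_zgB //; apply: augpowD => //; apply: augpowN.
Qed.

Definition zg_lift (F : V -> ZG W) x : ZG W := \sum_(u <- finsupp x) F u *~ x u.

Lemma zg_lift_widen F x (S : {fset V}) : finsupp x `<=` S ->
  zg_lift F x = \sum_(u <- S) F u *~ x u.
Proof. by move=> xS; exact: (big_finsupp_widen (F := fun u c => F u *~ c) xS). Qed.

Lemma additive_zg_lift F : additive_zg (zg_lift F).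
Proof.
move=> x y; change (zg_lift F (x + y) = zg_lift F x + zg_lift F y).
rewrite (zg_lift_widen F (finsupp_zgadd x y)).
rewrite (zg_lift_widen F (fsubsetUl (finsupp x) (finsupp y))).
rewrite (zg_lift_widen F (fsubsetUr (finsupp x) (finsupp y))) -big_split /=.
by apply: eq_bigr => u _; rewrite zgaddE mulrzDr.
Qed.

Lemma zg_lift_ebasis F v : zg_lift F (ebasis v) = F v.
Proof. by rewrite (zg_lift_widen F (finsupp_ebasis v)) big_seq_fset1 ebasisE eqxx. Qed.

Lemma additive_zg_sum f (I : Type) (l : seq I) (F : I -> ZG V) (n : I -> int) :
  additive_zg f -> f (\sum_(i <- l) F i *~ n i) = \sum_(i <- l) f (F i) *~ n i.
Proof.
move=> fD; have fMn y m : f (y *+ m) = f y *+ m.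
  by elim: m => [|m IHm]; rewrite ?mulr0n ?additive_zg0 // !mulrS additive_zgD // IHm.
elim: l => [|i l IH]; first by rewrite !big_nil additive_zg0.
rewrite !big_cons additive_zgD // IH; congr (_ + _).
case: (n i) => m; rewrite ?NegzE ?mulrNz ?fMn //.
by rewrite -sub0r additive_zgB // additive_zg0 // sub0r fMn.
Qed.

Lemma additive_zgE f : additive_zg f -> f =1 zg_lift (fun u => f (ebasis u)).
Proof. by move=> fD x; rewrite {1}(zg_decomp x) additive_zg_sum. Qed.

Lemma additive_zg_eq f g : additive_zg f -> additive_zg g ->
  (forall u, f (ebasis u) = g (ebasis u)) -> f =1 g.
Proof.
move=> fD gD fg x; rewrite additive_zgE // (additive_zgE gD).
by apply: eq_bigr => u _; rewrite fg.
Qed.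

Definition basis_mul f g : ZG V -> ZG W :=
  zg_lift (fun u => f (ebasis u) * g (ebasis u)).

Lemma basis_mul_leibniz f g v : additive_zg f -> additive_zg g ->
  forall y, basis_mul f g ((ebasis v - 1) * y) =
    basis_mul (fun x => f ((ebasis v - 1) * x)) (fun x => g (ebasis v * x)) y
    + basis_mul f (fun x => g ((ebasis v - 1) * x)) y.
Proof.
move=> fD gD; apply: additive_zg_eq => [||u].
- exact: additive_zg_mull (additive_zg_lift _).
- exact: additive_zg_add (additive_zg_lift _) (additive_zg_lift _).
rewrite /basis_mul !zg_lift_ebasis mulrBl mul1r ebasisM.
rewrite (additive_zgB (additive_zg_lift _)) !zg_lift_ebasis.
rewrite (additive_zgB fD) (additive_zgB gD).
by rewrite mulrBl mulrBr addrA subrK.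
Qed.

Definition strict_shift (r a : nat) f :=
  forall k, (k + a <= r)%N -> forall x, augpow k x -> augpow (k + a) (f x).

Lemma strict_shift0 r f : strict r f -> strict_shift r 0 f.
Proof. by move=> fs k; rewrite addn0; apply: fs. Qed.

Lemma strict_shift_mull r a f c :
  strict_shift r a f -> strict_shift r a (fun x => f (c * x)).
Proof. by move=> fs k ka x xk; apply: fs => //; apply: augpow_mull. Qed.

Lemma strict_shift_aug r a f v :
  strict_shift r a f -> strict_shift r a.+1 (fun x => f ((ebasis v - 1) * x)).
Proof.
move=> fs k; rewrite -addSnnS => ka x xk.
by apply: fs => //; apply: augpow_mul (aug_ebasis_sub1 v) xk.
Qed.

Lemma augpow_basis_mul_monomial r (vs : seq V) : forall w f g a b,
  additive_zg f -> additive_zg g -> strict_shift r a f -> strict_shift r b g ->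
  (size vs + a <= r)%N -> (size vs + b <= r)%N ->
  augpow (size vs + a + b) (basis_mul f g (aug_monomial vs w)).
Proof.
elim: vs => [|v vs IH] w f g a b fD gD fs gs /= ar br.
  rewrite /basis_mul zg_lift_ebasis; apply: augpowM.
    by apply: fs ar _ _; apply: augpow_0.
  by apply: gs br _ _; apply: augpow_0.
rewrite basis_mul_leibniz //; apply: augpowD.
- rewrite addSnnS; apply: IH; rewrite -?addSnnS //.
  + exact: additive_zg_mull.
  + exact: additive_zg_mull.
  + exact: strict_shift_aug.
  + exact: strict_shift_mull.
  + by apply: leq_trans br; rewrite leq_add2r.
- rewrite -addnA addSnnS -addnS addnA; apply: IH; rewrite -?addSnnS //.
  + exact: additive_zg_mull.
  + exact: strict_shift_aug.
  + by apply: leq_trans ar; rewrite leq_add2r.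
Qed.

End AdditiveMaps.

Theorem mainTheorem7 (V W : groupType) (r : nat) (f g h : ZG V -> ZG W) :
  additive_zg f -> additive_zg g -> strict r f -> strict r g ->
  additive_zg h ->
  (forall v : V, h (ebasis v) = zgmul (f (ebasis v)) (g (ebasis v))) ->
  strict r h.
Proof.
move=> fD gD fs gs hD hE s sr x xs.
have hfg : h =1 basis_mul f g.
  apply: additive_zg_eq => // [|u]; first exact: additive_zg_lift.
  by rewrite /basis_mul zg_lift_ebasis hE.
apply: (augpow_ind xs (zmod_closed_augpow_comp s hD)) => vs w vs_s.
rewrite hfg -vs_s; have := augpow_basis_mul_monomial (vs := vs) w fD gD
  (strict_shift0 fs) (strict_shift0 gs).
by rewrite !addn0; apply; rewrite vs_s.
Qed.
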